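(* For every integer $r\ge1$, writing $\zeta_r(0|z)=\zeta(0,\ldots,0|z)$ ($r$ zeros), \[ \zeta_r(0|1)=\frac{(-1)^r}{r+1}\qquad\text{and}\qquad\zeta_r(0|0)=\frac{(-1)^{r+1}}{r(r+1)}. \]
   Context: Normalized multiple Bernoulli polynomials: for integers $k\ge0$, $\zeta(-k|z)=-\frac{B_{k+1}(z)}{k+1}$ ($B_n(z)$ the Bernoulli polynomials, $B_n=B_n(0)$), and for $r\ge2$, $k_j\ge0$, $\zeta(-k_1,\ldots,-k_r|z)=-\frac{1}{k_r+1}\zeta(-k_1,\ldots,-k_{r-2},-k_{r-1}-k_r-1|z)-\frac12\zeta(-k_1,\ldots,-k_{r-2},-k_{r-1}-k_r|z)+\sum_{q=1}^{k_r}(-k_r)_q\frac{B_{q+1}}{(q+1)!}\zeta(-k_1,\ldots,-k_{r-2},-k_{r-1}-k_r+q|z)$, with $(a)_q=a(a+1)\cdots(a+q-1)$ (for $r=2$ the prefix is empty). *)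

(* all values are rationals (the polynomials have rational
   coefficients and are evaluated at rational points). *)
From mathcomp Require Import all_boot all_order all_algebra.
Set Implicit Arguments. Unset Strict Implicit. Unset Printing Implicit Defensive.
Import Order.TTheory GRing.Theory Num.Theory.
Local Open Scope ring_scope.

(* Bernoulli numbers B_0, ..., B_n with B_0 = 1 and, for n >= 1,
   sum_{k=0}^{n} C(n+1,k) B_k = 0  (so B_1 = -1/2). *)
Fixpoint bern_list (n : nat) : seq rat :=
  match n with
  | 0 => [:: 1]
  | n'.+1 =>
      let s := bern_list n' in
      rcons s (- (\sum_(k < n'.+1) ('C(n'.+2, k))%:R * nth 0 s k) / (n'.+2)%:R)
  end.

Definition bernoulli (n : nat) : rat := nth 0 (bern_list n) n.

Definition bernpoly (n : nat) (z : rat) : rat :=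
  \sum_(k < n.+1) ('C(n, k))%:R * bernoulli k * z ^+ (n - k).

Definition pochhammer (a : rat) (q : nat) : rat := \prod_(i < q) (a + i%:R).

(* zeta_fuel n ks z : the normalized multiple Bernoulli polynomial
   zeta(-k_1,...,-k_r | z) for ks = [:: k_1; ...; k_r], with fuel n >= r. *)
Fixpoint zeta_fuel (n : nat) (ks : seq nat) (z : rat) : rat :=
  match n with
  | 0 => 0
  | n'.+1 =>
    match ks with
    | [::] => 0
    | [:: k] => - bernpoly k.+1 z / (k.+1)%:R
    | _ =>
      let r := size ks in
      let pre := take (r - 2) ks in
      let a := nth 0%N ks (r - 2) in
      let b := nth 0%N ks (r - 1) in
      - (b.+1)%:R^-1 * zeta_fuel n' (rcons pre (a + b).+1%N) z
      - 2%:R^-1 * zeta_fuel n' (rcons pre (a + b)%N) z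
      + \sum_(1 <= q < b.+1)
          pochhammer (- b%:R) q * bernoulli q.+1 / ((q.+1)`!)%:R
          * zeta_fuel n' (rcons pre (a + b - q)%N) z
    end
  end.

Definition mzeta (ks : seq nat) (z : rat) : rat := zeta_fuel (size ks) ks z.

(* Let L_m be the linear form on Q[X] sending X^k to (-1)^k zeta(0,...,0,-k | z)
   (m zeros), and let A be the antidifference operator normalized by
   int_0^1 A q = 0, so that A X^k = B_(k+1)(X)/(k+1).  Read on its last two
   arguments with the first one equal to 0, the defining recursion says exactly
   L_(m+1) = L_m o A, while L_0 p = - (A (p(-X)))(z).  The derivatives of the
   binomial polynomials binom(X, n) satisfy A binom(X, n+1)' = binom(X, n+2)',
   hence zeta_r(0|z) = L_(r-1)(1) = binom(X, r+1)'(1 - z); its values at 0 and 1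
   are computed from the linear coefficients of the binomial polynomials. *)

From HB Require Import structures.
From mathcomp Require Import all_boot all_order all_algebra ring lra.
Import Order.TTheory GRing.Theory Num.Theory.
Set Implicit Arguments. Unset Strict Implicit. Unset Printing Implicit Defensive.
Local Open Scope ring_scope.

Lemma size_bern_list n : size (bern_list n) = n.+1.
Proof. by elim: n => [|n IHn] //=; rewrite size_rcons IHn. Qed.

Lemma nth_bern_list n k : (k <= n)%N -> nth 0 (bern_list n) k = bernoulli k.
Proof.
elim: n k => [|n IHn] k; first by rewrite leqn0 => /eqP ->.
rewrite leq_eqVlt => /orP [/eqP -> //|lt_kn].
by rewrite /= nth_rcons size_bern_list lt_kn IHn.
Qed.

Lemma bernoulli_sum_eq0 n : (2 <= n)%N ->
  \sum_(k < n) 'C(n, k)%:R * bernoulli k = 0.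
Proof.
case: n => [|[|n]] // _; rewrite big_ord_recr /=.
have -> : bernoulli n.+1 =
    - (\sum_(k < n.+1) 'C(n.+2, k)%:R * bernoulli k) / n.+2%:R.
  rewrite /bernoulli /= nth_rcons size_bern_list ltnn eqxx.
  by congr (- _ / _); apply: eq_bigr => i _; rewrite nth_bern_list // -ltnS.
by rewrite binSn mulrCA mulfV ?pnatr_eq0 // mulr1 subrr.
Qed.

Lemma bernoulli0 : bernoulli 0 = 1. Proof. by []. Qed.

Lemma bernoulli1 : bernoulli 1 = - 2%:R^-1.
Proof.
have := @bernoulli_sum_eq0 2 isT.
rewrite !big_ord_recr big_ord0 /= add0r bernoulli0 bin0 mul1r => /eqP.
rewrite addrC addr_eq0 => /eqP eq2B1.
by apply: (mulfI (_ : 2%:R != 0)); rewrite ?pnatr_eq0 // eq2B1 mulrN mulfV ?pnatr_eq0.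
Qed.

Section NatRoots.
Variable R : numDomainType.
Implicit Types p q : {poly R}.

Lemma nat_roots_poly0 p : (forall n : nat, p.[n%:R] = 0) -> p = 0.
Proof.
move=> p_nat; apply/eqP/negPn/negP => nz_p.
have all_roots : all (root p) [seq i%:R | i <- iota 0 (size p)].
  by apply/allP => _ /mapP [i _ ->]; apply/eqP.
have uniq_nat : uniq [seq (i%:R : R) | i <- iota 0 (size p)].
  by rewrite map_inj_uniq ?iota_uniq // => a b /eqP; rewrite eqr_nat => /eqP.
by have := max_poly_roots nz_p all_roots uniq_nat; rewrite size_map size_iota ltnn.
Qed.

Lemma horner_inj p q : (forall x, p.[x] = q.[x]) -> p = q.
Proof.
move=> eq_pq; apply/eqP; rewrite -subr_eq0; apply/eqP/nat_roots_poly0 => n.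
by rewrite hornerD hornerN eq_pq subrr.
Qed.

Lemma periodic_polyC p : (forall x, p.[x + 1] = p.[x]) -> p = (p.[0])%:P.
Proof.
move=> p_per; apply/eqP; rewrite -subr_eq0; apply/eqP/nat_roots_poly0.
elim=> [|n IHn]; first by rewrite !hornerE subrr.
by rewrite -natr1 !hornerE p_per -(hornerC p.[0] n%:R) -hornerN -hornerD IHn.
Qed.

Lemma deriv_eq0_polyC p : p^`() = 0 -> p = (p.[0])%:P.
Proof.
move=> dp0; apply/polyP => -[|i]; first by rewrite coefC horner_coef0.
have /eqP := congr1 (fun q => q`_i) dp0.
by rewrite coef_deriv coef0 coefC mulrn_eq0 => /eqP.
Qed.

End NatRoots.

Definition bernoulli_poly n : {poly rat} :=
  \sum_(k < n.+1) ('C(n, k)%:R * bernoulli k) *: 'X^(n - k).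

Lemma horner_bernoulli_poly n z : (bernoulli_poly n).[z] = bernpoly n z.
Proof.
by rewrite horner_sum; apply: eq_bigr => i _; rewrite hornerZ hornerXn.
Qed.

Lemma deriv_bernoulli_poly n :
  (bernoulli_poly n.+1)^`() = n.+1%:R *: bernoulli_poly n.
Proof.
rewrite /bernoulli_poly raddf_sum big_ord_recr /= subnn derivZ derivXn.
rewrite mulr0n scaler0 addr0 scaler_sumr; apply: eq_bigr => i _.
have le_in : (i <= n)%N by rewrite -ltnS.
rewrite derivZ derivXn -scaler_nat !scalerA subSn //=; congr (_ *: _).
by rewrite mulrAC -natrM mulnC -subSn // -mul_bin_down natrM -mulrA mulrCA.
Qed.

Lemma bernoulli_poly_at0 n : (bernoulli_poly n).[0] = bernoulli n.
Proof.
rewrite horner_sum big_ord_recr /= subnn hornerZ hornerXn expr0 mulr1 binn mul1r.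
rewrite big1 ?add0r // => i _.
by rewrite hornerZ hornerXn expr0n subn_eq0 leqNgt ltn_ord mulr0.
Qed.

Lemma bernoulli_poly_at1 n :
  (bernoulli_poly n).[1] = \sum_(k < n.+1) 'C(n, k)%:R * bernoulli k.
Proof.
by rewrite horner_sum; apply: eq_bigr => i _; rewrite hornerZ hornerXn expr1n mulr1.
Qed.

(* The difference of the two sides has zero derivative by induction, and
   vanishes at 0 by the defining recurrence of the Bernoulli numbers. *)
Lemma bernoulli_poly_shift n :
  bernoulli_poly n \Po ('X + 1) - bernoulli_poly n = n%:R *: 'X^(n.-1).
Proof.
elim: n => [|n IHn].
  by rewrite /bernoulli_poly big_ord1 expr0 comp_polyZ -polyC1 comp_polyC subrr scale0r.
apply/eqP; rewrite -subr_eq0; apply/eqP; set E := _ - _.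
have dE0 : E^`() = 0.
  rewrite !derivB deriv_comp deriv_bernoulli_poly derivD derivX derivC addr0.
  rewrite mulr1 derivZ derivXn comp_polyZ -scaler_nat -!scalerBr IHn subrr.
  by rewrite scaler0.
rewrite (deriv_eq0_polyC dE0) /E !hornerE horner_comp !hornerE.
rewrite bernoulli_poly_at0 bernoulli_poly_at1 big_ord_recr /= binn mul1r addrK.
case: n {IHn E dE0} => [|n]; first by rewrite big_ord1 bin0 mul1r subrr.
by rewrite (@bernoulli_sum_eq0 n.+2) // expr0n mulr0 subrr.
Qed.

Section LinearExtension.
Variable R : nzRingType.
Implicit Types (f : nat -> R) (p : {poly R}).

Definition lin_mono f p : R := \sum_(i < size p) p`_i * f i.

Lemma lin_monoE N f p : (size p <= N)%N -> lin_mono f p = \sum_(i < N) p`_i * f i.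
Proof.
move=> le_pN; rewrite /lin_mono (big_ord_widen N (fun i => p`_i * f i) le_pN).
rewrite big_mkcond /=; apply: eq_bigr => i _; case: ltnP => // le_pi.
by rewrite nth_default ?mul0r.
Qed.

Fact lin_monoD f p q : lin_mono f (p + q) = lin_mono f p + lin_mono f q.
Proof.
set N := maxn (size p) (size q).
rewrite (@lin_monoE N) ?(leq_trans (size_polyD _ _)) //.
rewrite (@lin_monoE N _ p (leq_maxl _ _)) (@lin_monoE N _ q (leq_maxr _ _)).
by rewrite -big_split; apply: eq_bigr => i _; rewrite coefD mulrDl.
Qed.

Fact lin_monoZ f c p : lin_mono f (c *: p) = c * lin_mono f p.
Proof.
rewrite (@lin_monoE (size p)) ?size_scale_leq // mulr_sumr.
by apply: eq_bigr => i _; rewrite coefZ mulrA.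
Qed.

HB.instance Definition _ f :=
  GRing.isSemilinear.Build R {poly R} R _ (lin_mono f) (lin_monoZ f, lin_monoD f).

Lemma lin_monoXn f n : lin_mono f 'X^n = f n.
Proof.
rewrite (@lin_monoE n.+1) ?size_polyXn // big_ord_recr /= coefXn eqxx mul1r.
by rewrite big1 ?add0r // => i _; rewrite coefXn (ltn_eqF (ltn_ord i)) mul0r.
Qed.

Lemma lin_monoC f c : lin_mono f c%:P = c * f 0%N.
Proof. by rewrite -alg_polyC -(expr0 'X) linearZ /= lin_monoXn. Qed.

Lemma horner_lin_mono p x : p.[x] = lin_mono (fun i => x ^+ i) p.
Proof. exact: horner_coef. Qed.

End LinearExtension.

Lemma lin_mono_compNX (R : comNzRingType) (f : nat -> R) p :
  lin_mono f (p \Po - 'X) = lin_mono (fun k => (-1) ^+ k * f k) p.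
Proof.
rewrite comp_polyE raddf_sum /=; apply: eq_bigr => i _.
by rewrite -scaleN1r exprZn !linearZ /= lin_monoXn mulrA.
Qed.

Definition int01 : {poly rat} -> rat := lin_mono (fun i => i.+1%:R^-1).

Lemma int01_deriv p : int01 p^`() = p.[1] - p.[0].
Proof.
rewrite /int01 (@lin_monoE _ (size p)); last first.
  by have [->|/lt_size_deriv/ltnW //] := eqVneq p 0; rewrite deriv0 size_poly0.
rewrite horner_lin_mono (@lin_monoE _ (size p).+1) // big_ord_recl /= horner_coef0.
rewrite expr0 mulr1 addrC addKr; apply: eq_bigr => i _.
by rewrite coef_deriv expr1n mulr1 -[p`_i.+1 *+ _]mulr_natr mulfK ?pnatr_eq0.
Qed.

Definition antidiffXn i : {poly rat} := i.+1%:R^-1 *: bernoulli_poly i.+1.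

Lemma antidiffXn_shift i x : (antidiffXn i).[x + 1] - (antidiffXn i).[x] = x ^+ i.
Proof.
have := congr1 (horner^~ x) (bernoulli_poly_shift i.+1).
rewrite /= hornerD hornerN horner_comp !hornerE /= => shift_x.
by rewrite -mulrBr shift_x mulrA mulVf ?mul1r ?pnatr_eq0.
Qed.

Lemma int01_antidiffXn i : int01 (antidiffXn i) = 0.
Proof.
rewrite /antidiffXn; have nz_i2 : i.+2%:R != 0 :> rat by rewrite pnatr_eq0.
have -> : bernoulli_poly i.+1 = i.+2%:R^-1 *: (bernoulli_poly i.+2)^`().
  by rewrite deriv_bernoulli_poly scalerA mulVf ?scale1r.
have shift0 : (bernoulli_poly i.+2).[1] - (bernoulli_poly i.+2).[0] = 0.
  have := congr1 (horner^~ 0) (bernoulli_poly_shift i.+2).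
  by rewrite /= hornerD hornerN horner_comp !hornerE exprS mul0r mulr0.
by rewrite /int01 !linearZ /= -/int01 int01_deriv shift0 !mulr0.
Qed.

Definition antidiff (q : {poly rat}) : {poly rat} :=
  \sum_(i < size q) q`_i *: antidiffXn i.

Lemma scalar_antidiff (h : {scalar {poly rat}}) q :
  h (antidiff q) = lin_mono (h \o antidiffXn) q.
Proof.
by rewrite /antidiff raddf_sum /lin_mono; apply: eq_bigr => i _; rewrite [LHS]linearZ.
Qed.

Lemma antidiff_shift q x : (antidiff q).[x + 1] - (antidiff q).[x] = q.[x].
Proof.
rewrite [RHS]horner_coef -!horner_evalE !scalar_antidiff /lin_mono -sumrB.
by apply: eq_bigr => i _; rewrite -mulrBr /= !horner_evalE antidiffXn_shift.
Qed.

Lemma int01_antidiff q : int01 (antidiff q) = 0.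
Proof.
rewrite /int01 scalar_antidiff /lin_mono big1 // => i _.
by rewrite /= -/int01 int01_antidiffXn mulr0.
Qed.

(* A polynomial with the same differences as [antidiff q] differs from it by a
   periodic, hence constant, polynomial, which [int01] then pins down. *)
Lemma antidiff_unique (Q q : {poly rat}) :
  (forall x, Q.[x + 1] - Q.[x] = q.[x]) -> int01 Q = 0 -> Q = antidiff q.
Proof.
move=> Q_shift int01Q; apply/eqP; rewrite -subr_eq0; apply/eqP.
have D_per x : (Q - antidiff q).[x + 1] = (Q - antidiff q).[x].
  by have := Q_shift x; have := antidiff_shift q x; rewrite !hornerE; lra.
have : int01 (Q - antidiff q) = 0.
  by rewrite /int01 raddfB /= -/int01 int01Q int01_antidiff subrr.
rewrite (periodic_polyC D_per) /int01 lin_monoC invr1 mulr1 => ->.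
by rewrite polyC0.
Qed.

Section BinomialPolynomials.
Variable R : numFieldType.

(* binom_poly n = X (X - 1) ... (X - n + 1) / n!, i.e. binomial(X, n). *)
Fixpoint binom_poly n : {poly R} :=
  if n is n'.+1 then n'.+1%:R^-1 *: (binom_poly n' * ('X - n'%:R%:P)) else 1.

Lemma horner_binom_polyS n x :
  (binom_poly n.+1).[x] = (binom_poly n).[x] * (x - n%:R) / n.+1%:R.
Proof. by rewrite /= hornerZ hornerM !hornerE mulrC mulrA. Qed.

Lemma binom_poly_pascal n :
  binom_poly n.+1 \Po ('X + 1) - binom_poly n.+1 = binom_poly n.
Proof.
apply: horner_inj => x; rewrite hornerD hornerN horner_comp hornerD hornerX hornerC.
elim: n x => [|n IHn] x; first by rewrite !horner_binom_polyS /= !hornerE; field.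
have nz_n1 : n.+1%:R != 0 :> R by rewrite pnatr_eq0.
have nz_n2 : n.+2%:R != 0 :> R by rewrite pnatr_eq0.
rewrite horner_binom_polyS [(binom_poly n.+2).[x]]horner_binom_polyS.
rewrite (_ : (binom_poly n.+1).[x + 1] = (binom_poly n.+1).[x] + (binom_poly n).[x]);
  last by rewrite -IHn addrCA subrr addr0.
rewrite [(binom_poly n.+1).[x]]horner_binom_polyS.
by move: nz_n1 nz_n2; rewrite -!natr1 => nz_n1 nz_n2; field; rewrite nz_n1 nz_n2.
Qed.

Lemma binom_poly_nat_root n j : (j < n)%N -> (binom_poly n).[j%:R] = 0.
Proof.
elim: n => [//|n IHn]; rewrite ltnS leq_eqVlt horner_binom_polyS.
by case/orP => [/eqP ->|/IHn ->]; rewrite ?subrr !(mulr0, mul0r).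
Qed.

Lemma deriv_binom_poly_pascal n x :
  (binom_poly n.+1)^`().[x + 1] - (binom_poly n.+1)^`().[x] = (binom_poly n)^`().[x].
Proof.
have := congr1 deriv (binom_poly_pascal n).
rewrite derivB deriv_comp derivD derivX derivC addr0 mulr1 => <-.
by rewrite hornerD hornerN horner_comp !hornerE.
Qed.

Lemma deriv_binom_poly1 : (binom_poly 1)^`() = 1.
Proof. by rewrite /= invr1 scale1r mul1r derivB derivX derivC subr0. Qed.

Lemma deriv_binom_poly_at0 n : (binom_poly n.+1)^`().[0] = (-1) ^+ n / n.+1%:R.
Proof.
rewrite horner_coef0 coef_deriv mulr1n.
have coef1S m : (binom_poly m.+1)`_1 =
    ((binom_poly m)`_0 - (binom_poly m)`_1 * m%:R) / m.+1%:R.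
  by rewrite [binom_poly m.+1]/= coefZ mulrBr coefB coefMX coefMC mulrC.
elim: n => [|n IHn]; first by rewrite coef1S /= coefC mulr0 subr0 expr0.
have coef0 : (binom_poly n.+1)`_0 = 0.
  by rewrite -horner_coef0 -[0]/(0%:R) binom_poly_nat_root.
have nz_n1 : n.+1%:R != 0 :> R by rewrite pnatr_eq0.
have nz_n2 : n.+2%:R != 0 :> R by rewrite pnatr_eq0.
rewrite coef1S coef0 IHn exprS.
by move: nz_n1 nz_n2; rewrite -!natr1 => nz_n1 nz_n2; field; rewrite nz_n1 nz_n2.
Qed.

End BinomialPolynomials.

Lemma antidiff_deriv_binom_poly n :
  antidiff (binom_poly rat n.+1)^`() = (binom_poly rat n.+2)^`().
Proof.
symmetry; apply: antidiff_unique; first exact: deriv_binom_poly_pascal.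
by rewrite int01_deriv -[1]/(1%:R) -[0]/(0%:R) !binom_poly_nat_root ?subrr.
Qed.

Lemma antidiff_reflect_deriv_binom_poly n :
  antidiff ((binom_poly rat n.+1)^`() \Po - 'X) =
  - ((binom_poly rat n.+2)^`() \Po (1 - 'X)).
Proof.
symmetry; apply: antidiff_unique.
  move=> x; rewrite !hornerN !horner_comp !hornerE.
  rewrite -(deriv_binom_poly_pascal n.+1 (- x)).
  have -> : 1 - (x + 1) = - x by ring.
  have -> : 1 - x = - x + 1 by ring.
  ring.
have -> : - ((binom_poly rat n.+2)^`() \Po (1 - 'X)) =
    (binom_poly rat n.+2 \Po (1 - 'X))^`().
  by rewrite deriv_comp derivB derivX -polyC1 derivC sub0r mulrN1.
rewrite int01_deriv !horner_comp !hornerD !hornerN !hornerX !hornerC subrr subr0.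
by rewrite -[0]/(0%:R) -[1]/(1%:R) !binom_poly_nat_root // subrr.
Qed.

Lemma zeta_fuel_rcons2 n s a b z :
  zeta_fuel n.+1 (rcons (rcons s a) b) z =
    - b.+1%:R^-1 * zeta_fuel n (rcons s (a + b).+1%N) z
    - 2%:R^-1 * zeta_fuel n (rcons s (a + b)%N) z
    + \sum_(1 <= q < b.+1) pochhammer (- b%:R) q * bernoulli q.+1 / (q.+1)`!%:R
        * zeta_fuel n (rcons s (a + b - q)%N) z.
Proof.
have size_s2 : size (rcons (rcons s a) b) = (size s).+2 by rewrite !size_rcons.
have -> : zeta_fuel n.+1 (rcons (rcons s a) b) z =
    let r := size (rcons (rcons s a) b) in
    let pre := take (r - 2) (rcons (rcons s a) b) in
    let a' := nth 0%N (rcons (rcons s a) b) (r - 2) in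
    let b' := nth 0%N (rcons (rcons s a) b) (r - 1) in
    - b'.+1%:R^-1 * zeta_fuel n (rcons pre (a' + b').+1%N) z
    - 2%:R^-1 * zeta_fuel n (rcons pre (a' + b')%N) z
    + \sum_(1 <= q < b'.+1) pochhammer (- b'%:R) q * bernoulli q.+1 / (q.+1)`!%:R
        * zeta_fuel n (rcons pre (a' + b' - q)%N) z.
  by case: s {size_s2} => [|x [|y t]].
have s2E : rcons (rcons s a) b = s ++ [:: a; b] by rewrite -!cats1 -catA.
have take_s2 : take (size s) (rcons (rcons s a) b) = s by rewrite s2E take_size_cat.
have nth_a : nth 0%N (rcons (rcons s a) b) (size s) = a.
  by rewrite s2E nth_cat ltnn subnn.
have nth_b : nth 0%N (rcons (rcons s a) b) (size s).+1 = b.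
  by rewrite s2E nth_cat ltnNge leqnSn subSnn.
by cbv zeta; rewrite size_s2 !subSS !subn0 take_s2 nth_a nth_b.
Qed.

Lemma mzeta_rcons2 s a b z :
  mzeta (rcons (rcons s a) b) z =
    - b.+1%:R^-1 * mzeta (rcons s (a + b).+1%N) z
    - 2%:R^-1 * mzeta (rcons s (a + b)%N) z
    + \sum_(1 <= q < b.+1) pochhammer (- b%:R) q * bernoulli q.+1 / (q.+1)`!%:R
        * mzeta (rcons s (a + b - q)%N) z.
Proof.
rewrite /mzeta !size_rcons zeta_fuel_rcons2; congr (_ + _).
by apply: eq_bigr => q _; rewrite size_rcons.
Qed.

Lemma pochhammer_opp_nat i q :
  (q <= i)%N -> pochhammer (- i%:R) q = (-1) ^+ q * (i ^_ q)%:R.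
Proof.
elim: q => [|q IHq] le_qi; first by rewrite /pochhammer big_ord0 ffactn0 mulr1.
rewrite /pochhammer big_ord_recr /= -/(pochhammer _ _) IHq ?(ltnW le_qi) //.
by rewrite ffactnSr natrM natrB ?(ltnW le_qi) // exprS; ring.
Qed.

Definition zeta_form m z : {poly rat} -> rat :=
  lin_mono (fun k => (-1) ^+ k * mzeta (rcons (nseq m 0%N) k) z).

Lemma nseqS_rcons (T : Type) (x : T) m : nseq m.+1 x = rcons (nseq m x) x.
Proof. by rewrite -cats1 -[[:: x]]/(nseq 1 x) -nseqD addn1. Qed.

(* Expanding [B_(i+1)(X) / (i+1)] into monomials, the terms [k = 0, 1] give the
   first two terms of the recursion and [k = q + 1 >= 2] the Pochhammer terms,
   since [C(i+1, q+1) / (i+1) = i^_q / (q+1)!]. *)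
Lemma zeta_form_antidiffXn m z i :
  zeta_form m z (antidiffXn i) = (-1) ^+ i * mzeta (rcons (nseq m.+1 0%N) i) z.
Proof.
rewrite nseqS_rcons mzeta_rcons2 !add0n.
set Z := fun k => mzeta (rcons (nseq m 0%N) k) z.
rewrite /zeta_form /antidiffXn linearZ /= /bernoulli_poly raddf_sum /=.
under eq_bigr do rewrite linearZ /= lin_monoXn.
rewrite big_ord_recl big_ord_recl /= big_add1 big_mkord /= -/(Z _).
have nz_fact q : (q.+2)`!%:R != 0 :> rat by rewrite pnatr_eq0 -lt0n fact_gt0.
have signE j : (j <= i)%N -> (-1) ^+ (i - j) = (-1) ^+ i * (-1) ^+ j :> rat.
  by move=> le_ji; rewrite -{2}(subnK le_ji) exprD -mulrA -expr2 sqrr_sign mulr1.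
have sum_terms : \sum_(k < i) 'C(i.+1, k.+2)%:R * bernoulli k.+2 *
       ((-1) ^+ (i.+1 - k.+2) * Z (i.+1 - k.+2)%N) =
    (i.+1%:R * (-1) ^+ i) * \sum_(k < i)
      pochhammer (- i%:R) k.+1 * bernoulli k.+2 / (k.+2)`!%:R * Z (i - k.+1)%N.
  rewrite mulr_sumr; apply: eq_bigr => k _.
  have le_ki : (k.+1 <= i)%N by [].
  have binE : 'C(i.+1, k.+2)%:R = i.+1%:R * (i ^_ k.+1)%:R / (k.+2)`!%:R :> rat.
    by rewrite -natrM -ffactSS -bin_ffact natrM mulfK.
  rewrite subSS pochhammer_opp_nat // signE // binE; field; exact: nz_fact.
rewrite /bump /= !add1n subn0 subSS subn0 sum_terms bernoulli0 bernoulli1 bin0 bin1.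
have : i.+1%:R != 0 :> rat by rewrite pnatr_eq0.
by rewrite exprS -natr1 => nz_i1; field; exact: nz_i1.
Qed.

Lemma zeta_formS m z q : zeta_form m.+1 z q = zeta_form m z (antidiff q).
Proof.
rewrite [RHS]/zeta_form scalar_antidiff /lin_mono; apply: eq_bigr => i _.
by rewrite /= -/(zeta_form _ _) zeta_form_antidiffXn.
Qed.

Lemma zeta_form_deriv_binom_poly m z n :
  zeta_form m z (binom_poly rat n.+1)^`() =
  zeta_form 0 z (binom_poly rat (n.+1 + m))^`().
Proof.
elim: m n => [|m IHm] n; first by rewrite addn0.
by rewrite zeta_formS antidiff_deriv_binom_poly IHm addnS.
Qed.

Lemma zeta_form0 z p : zeta_form 0 z p = - (antidiff (p \Po - 'X)).[z].
Proof.
rewrite -horner_evalE scalar_antidiff lin_mono_compNX /zeta_form /lin_mono -sumrN.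
apply: eq_bigr => i _; rewrite /= horner_evalE /antidiffXn hornerZ.
by rewrite horner_bernoulli_poly /mzeta /= mulNr [_^-1 * _]mulrC !mulrN.
Qed.

Lemma mzeta_nseq0 m z : mzeta (nseq m.+1 0%N) z = (binom_poly rat m.+2)^`().[1 - z].
Proof.
have -> : mzeta (nseq m.+1 0%N) z = zeta_form m z 1.
  by rewrite /zeta_form -polyC1 lin_monoC mul1r expr0 mul1r nseqS_rcons.
rewrite -deriv_binom_poly1 zeta_form_deriv_binom_poly zeta_form0 add1n.
by rewrite antidiff_reflect_deriv_binom_poly hornerN opprK horner_comp !hornerE.
Qed.

Theorem proposition3p6 (r : nat) (hr : (1 <= r)%N) :
  mzeta (nseq r 0%N) 1 = (-1) ^+ r / (r.+1)%:R /\
  mzeta (nseq r 0%N) 0 = (-1) ^+ r.+1 / (r * r.+1)%:R.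
Proof.
case: r hr => [//|m] _; rewrite !mzeta_nseq0 subrr subr0.
split; first exact: deriv_binom_poly_at0.
have := @deriv_binom_poly_pascal rat m.+1 0; rewrite add0r => /eqP.
rewrite subr_eq => /eqP ->; rewrite !deriv_binom_poly_at0.
have nz_m1 : m.+1%:R != 0 :> rat by rewrite pnatr_eq0.
have nz_m2 : m.+2%:R != 0 :> rat by rewrite pnatr_eq0.
move: nz_m1 nz_m2; rewrite natrM !exprS -!natr1 => nz_m1 nz_m2.
by field; rewrite nz_m1 nz_m2.
Qed.
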